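(* Let $W$ be a positive word. Let $S$ be a word in the letters $\sigma_1,\dots,\sigma_{n-1}$ only, of maximal length among such words for which $W\doteq ST$ for some positive word $T$. Suppose also that $W\doteq AV$ where $A$ is a word in the letters $\sigma_1,\dots,\sigma_{n-1}$ only and $V$ is a positive word. Then $S$ is left divisible by $A$, i.e. $S\doteq AU$ for some positive word $U$. Analogously for right division: if $S$ is a word in the $\sigma_i$ of maximal length with $W\doteq TS$ for some positive $T$, and $W\doteq VA$ with $A$ a word in the $\sigma_i$ and $V$ positive, then $S\doteq UA$ for some positive word $U$.
   Context: Fix $n\ge 2$. The positive singular braid monoid $SB_n^+$ is the monoid with generators $\sigma_1,\dots,\sigma_{n-1},x_1,\dots,x_{n-1}$ and relations: $\sigma_i\sigma_j=\sigma_j\sigma_i$ and $x_ix_j=x_jx_i$ if $|i-j|>1$; $x_i\sigma_j=\sigma_jx_i$ if $|i-j|\ne 1$; $\sigma_i\sigma_{i+1}\sigma_i=\sigma_{i+1}\sigma_i\sigma_{i+1}$; $\sigma_i\sigma_{i+1}x_i=x_{i+1}\sigma_i\sigma_{i+1}$; $\sigma_{i+1}\sigma_ix_{i+1}=x_i\sigma_{i+1}\sigma_i$. A positive word is a word in the letters $\sigma_i,x_i$. For positive words, $A\doteq B$ means they represent the same element of $SB_n^+$. *)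

From mathcomp Require Import all_boot.
Set Implicit Arguments. Unset Strict Implicit. Unset Printing Implicit Defensive.

(* Letters: Sig i = sigma_i, X i = x_i (indices are meant in 1..n-1). *)
Inductive letter : Type := Sig of nat | X of nat.

Definition idx (a : letter) : nat := match a with Sig i => i | X i => i end.
Definition is_sig (a : letter) : bool := if a is Sig _ then true else false.

Definition valid_letter (n : nat) (a : letter) : bool := (1 <= idx a) && (idx a <= n - 1).

Definition positive_word (n : nat) (w : seq letter) : bool := all (valid_letter n) w.

Definition sigma_word (n : nat) (w : seq letter) : bool :=
  all (fun a => valid_letter n a && is_sig a) w.

Definition far (i j : nat) : bool := (i.+1 < j) || (j.+1 < i).
Definition not_adj (i j : nat) : bool := ~~ ((i == j.+1) || (j == i.+1)).
Definition vi (n i : nat) : bool := (1 <= i) && (i <= n - 1).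

Inductive sb_rel (n : nat) : seq letter -> seq letter -> Prop :=
| rel_ss i j : vi n i -> vi n j -> far i j ->
    sb_rel n [:: Sig i; Sig j] [:: Sig j; Sig i]
| rel_xx i j : vi n i -> vi n j -> far i j ->
    sb_rel n [:: X i; X j] [:: X j; X i]
| rel_xs i j : vi n i -> vi n j -> not_adj i j ->
    sb_rel n [:: X i; Sig j] [:: Sig j; X i]
| rel_braid i : vi n i -> vi n i.+1 ->
    sb_rel n [:: Sig i; Sig i.+1; Sig i] [:: Sig i.+1; Sig i; Sig i.+1]
| rel_mix1 i : vi n i -> vi n i.+1 ->
    sb_rel n [:: Sig i; Sig i.+1; X i] [:: X i.+1; Sig i; Sig i.+1]
| rel_mix2 i : vi n i -> vi n i.+1 ->
    sb_rel n [:: Sig i.+1; Sig i; X i.+1] [:: X i; Sig i.+1; Sig i].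

Inductive sb_eq (n : nat) : seq letter -> seq letter -> Prop :=
| sb_refl w : sb_eq n w w
| sb_sym u v : sb_eq n u v -> sb_eq n v u
| sb_trans u v w : sb_eq n u v -> sb_eq n v w -> sb_eq n u w
| sb_step u v l r : sb_rel n l r -> sb_eq n (u ++ l ++ v) (u ++ r ++ v).

From mathcomp Require Import all_boot.
From HB Require Import structures.
From mathcomp Require Import zify.
Set Implicit Arguments. Unset Strict Implicit. Unset Printing Implicit Defensive.

(* The defining relations of SB_n^+ form a complemented presentation: for
   letters a <> b there is at most one relation a p = b q, and |p| = |q|.
   Dehornoy's word reversing for such a presentation is complete as soon as
   the cube condition holds on every triple of letters: from A V = S T one
   then reverses A^-1 S to P Q^-1 with A P = S Q, V = P Z and T = Q Z. Whether
   the cube condition holds on a triple only depends on which of the three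
   indices are equal or adjacent, so after renaming the indices it is checked
   by computation on the letters of index below 7.
   The complement of two sigma letters consists of sigma letters, so S Q is a
   sigma word with W = S Q Z; maximality of S forces Q to be empty, whence
   S = A P. Right division is left division for mirrored words, since
   mirroring maps the defining relations to relations. *)

(** * Word reversing *)

Section Reversing.

Variable T : eqType.
Variable compl : T -> T -> option (seq T * seq T).
Hypothesis compl_sym : forall a b p q, compl a b = Some (p, q) -> compl b a = Some (q, p).
Hypothesis compl_refl : forall a, compl a a = Some ([::], [::]).
Hypothesis compl_size : forall a b p q, compl a b = Some (p, q) -> size p = size q.

Inductive cstep : seq T -> seq T -> Prop :=
| CStep x y a b p q : compl a b = Some (p, q) -> cstep (x ++ a :: p ++ y) (x ++ b :: q ++ y).

Inductive ceq : seq T -> seq T -> Prop :=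
| ceq_refl w : ceq w w
| ceq_cstep u v w : cstep u v -> ceq v w -> ceq u w.
#[local] Hint Resolve ceq_refl : core.

Lemma cstep_sym u v : cstep u v -> cstep v u.
Proof. by case=> x y a b p q /compl_sym; apply: CStep. Qed.

Lemma cstep_catl z u v : cstep u v -> cstep (z ++ u) (z ++ v).
Proof. by case=> x y a b p q F; rewrite !catA; apply: CStep. Qed.

Lemma cstep_catr z u v : cstep u v -> cstep (u ++ z) (v ++ z).
Proof. by case=> x y a b p q F; rewrite -!catA -!cat_cons -!catA; apply: CStep. Qed.

Lemma cstep_size u v : cstep u v -> size u = size v.
Proof. by case=> x y a b p q /compl_size Hpq; rewrite !size_cat /= !size_cat Hpq. Qed.

Lemma ceq1 u v : cstep u v -> ceq u v.
Proof. by move/ceq_cstep; apply. Qed.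

Lemma ceq_trans u v w : ceq u v -> ceq v w -> ceq u w.
Proof. by elim=> // u1 v1 w1 St _ IH /IH; apply: ceq_cstep. Qed.

Lemma ceq_sym u v : ceq u v -> ceq v u.
Proof.
by elim=> // u1 v1 w1 St _ IH; apply: ceq_trans IH (ceq1 (cstep_sym St)).
Qed.

Lemma ceq_catl z u v : ceq u v -> ceq (z ++ u) (z ++ v).
Proof. by elim=> // u1 v1 w1 /(cstep_catl z) St _; apply: ceq_cstep. Qed.

Lemma ceq_catr z u v : ceq u v -> ceq (u ++ z) (v ++ z).
Proof. by elim=> // u1 v1 w1 /(cstep_catr z) St _; apply: ceq_cstep. Qed.

Lemma ceq_size u v : ceq u v -> size u = size v.
Proof. by elim=> // u1 v1 w1 /cstep_size -> _. Qed.

Lemma ceq_cons a u v : ceq u v -> ceq (a :: u) (a :: v).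
Proof. exact: (ceq_catl [:: a]). Qed.

(* [reverses u v P Q]: the word [u^-1 v] reverses to [P Q^-1]. *)
Inductive reverses : seq T -> seq T -> seq T -> seq T -> Prop :=
| reverses_nill v : reverses [::] v v [::]
| reverses_nilr a u : reverses (a :: u) [::] [::] (a :: u)
| reverses_cons a u b v p q P Q R K : compl a b = Some (p, q) ->
    reverses u p P Q -> reverses v (q ++ Q) R K -> reverses (a :: u) (b :: v) (P ++ K) R.

Lemma reverses_ceq u v P Q : reverses u v P Q -> ceq (u ++ P) (v ++ Q).
Proof.
elim=> {u v P Q} [v|a u|a u b v p q P Q R K F _ IH1 _ IH2]; rewrite ?cats0 //.
have Eab : cstep (a :: p ++ Q ++ K) (b :: q ++ Q ++ K) by apply: (@CStep [::]).
rewrite /= catA; apply: ceq_trans (ceq_cons a (ceq_catr K IH1)) _.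
rewrite -catA; apply: ceq_cstep Eab _; rewrite catA; exact/ceq_cons/ceq_sym.
Qed.

Lemma reverses_all (L : pred T) u v P Q :
  (forall a b p q, compl a b = Some (p, q) -> L a -> L b -> all L p && all L q) ->
  reverses u v P Q -> all L u -> all L v -> all L P && all L Q.
Proof.
move=> HL; elim=> {u v P Q} [v|a u|a u b v p q P Q R K F _ IH1 _ IH2] //=.
  by move=> _ ->.
move=> /andP [La Lu] /andP [Lb Lv]; have /andP [Lp Lq] := HL _ _ _ _ F La Lb.
have /andP [LP LQ] := IH1 Lu Lp.
have LqQ : all L (q ++ Q) by rewrite all_cat Lq LQ.
have /andP [LR LK] := IH2 Lv LqQ.
by rewrite all_cat LP LK LR.
Qed.

Definition via_compl a V b W :=
  exists p q Z, compl a b = Some (p, q) /\ ceq V (p ++ Z) /\ ceq W (q ++ Z).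

Definition cube a b c := forall p1 q1 p2 q2 P Q,
  compl a c = Some (p1, q1) -> compl c b = Some (p2, q2) -> reverses q1 p2 P Q ->
  exists p q K, compl a b = Some (p, q) /\ ceq (p1 ++ P) (p ++ K) /\ ceq (q2 ++ Q) (q ++ K).

Section Completeness.

Hypothesis cube_all : forall a b c, cube a b c.

Definition complete_at m := forall u v X Y, size (u ++ X) = m -> ceq (u ++ X) (v ++ Y) ->
  exists P Q Z, reverses u v P Q /\ ceq X (P ++ Z) /\ ceq Y (Q ++ Z).

Definition heads_via_compl_at m := forall a b V W, size V = m ->
  ceq (a :: V) (b :: W) -> via_compl a V b W.

Lemma complete_of_heads m :
  (forall k, k < m -> heads_via_compl_at k /\ complete_at k) -> complete_at m.
Proof.
move=> IH [|a u] v X Y Hs E.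
  by exists v, [::], Y; split; [constructor | split].
case: v E => [|b v] E.
  by exists [::], (a :: u), X; split; [constructor | split=> //; apply: ceq_sym].
have [Hheads Hcomplete] : heads_via_compl_at (size (u ++ X)) /\ complete_at (size (u ++ X)).
  by apply: IH; rewrite -Hs.
have [p [q [Z [F [EX EY]]]]] := Hheads a b (u ++ X) (v ++ Y) erefl E.
have [P [Q [Z1 [R1 [E1 E2]]]]] := Hcomplete u p X Z erefl EX.
have EY' : ceq (v ++ Y) ((q ++ Q) ++ Z1).
  by apply: ceq_trans EY _; rewrite -catA; apply: ceq_catl.
have Hs' : size (v ++ Y) = size (u ++ X) by case: (ceq_size E).
have [R [K [Z2 [R2 [E3 E4]]]]] := Hcomplete v (q ++ Q) Y Z1 Hs' EY'.
exists (P ++ K), R, Z2; split; first exact: reverses_cons F R1 R2.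
split=> //; apply: ceq_trans E1 _; rewrite -catA; exact: ceq_catl.
Qed.

Lemma cstep_via_compl a V c U : cstep (a :: V) (c :: U) -> via_compl a V c U.
Proof.
move E1: (a :: V) => w1; move E2: (c :: U) => w2 St.
case: St E1 E2 => -[|d x] y a' b' p q F /=.
  by case=> -> -> [-> ->]; exists p, q, y.
case=> -> -> [-> ->]; exists [::], [::], (x ++ b' :: q ++ y); split=> //.
by split=> //; apply/ceq1/CStep.
Qed.

Lemma via_compl_trans m a V c U b W : complete_at m -> size V = m ->
  via_compl a V c U -> via_compl c U b W -> via_compl a V b W.
Proof.
move=> Hcomplete Hs [p1 [q1 [Z1 [F1 [E1 E2]]]]] [p2 [q2 [Z2 [F2 [E3 E4]]]]].
have E : ceq (q1 ++ Z1) (p2 ++ Z2) := ceq_trans (ceq_sym E2) E3.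
have Hs' : size (q1 ++ Z1) = m by rewrite -Hs (ceq_size E1) !size_cat (compl_size F1).
have [P [Q [K [HR [E5 E6]]]]] := Hcomplete _ _ _ _ Hs' E.
have [p [q [K' [F [E7 E8]]]]] := cube_all F1 F2 HR.
exists p, q, (K' ++ K); split=> //; split.
  apply: ceq_trans E1 _; apply: ceq_trans (ceq_catl _ E5) _.
  by rewrite !catA; apply: ceq_catr.
apply: ceq_trans E4 _; apply: ceq_trans (ceq_catl _ E6) _.
by rewrite !catA; apply: ceq_catr.
Qed.

Lemma heads_of_complete m : complete_at m -> heads_via_compl_at m.
Proof.
move=> Hcomplete a b V W Hs; move E1: (a :: V) => w1; move E2: (b :: W) => w2 E.
elim: E a V Hs E1 E2 => {w1 w2} [w|u [|c U] w St _ IH] a V Hs E1 E2.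
- by move: E2; rewrite -E1 => -[-> ->]; exists [::], [::], V; rewrite compl_refl.
- by move/cstep_size: St; rewrite -E1.
have HsU : size U = m by move/cstep_size: St; rewrite -E1 => -[<-].
apply: (via_compl_trans Hcomplete Hs _ (IH c U HsU erefl E2)).
by apply: cstep_via_compl; rewrite E1.
Qed.

Theorem reversing_complete u v X Y : ceq (u ++ X) (v ++ Y) ->
  exists P Q Z, reverses u v P Q /\ ceq X (P ++ Z) /\ ceq Y (Q ++ Z).
Proof.
have Hall m : heads_via_compl_at m /\ complete_at m.
  elim/ltn_ind: m => m IH; have Hcomplete := complete_of_heads IH.
  by split=> //; apply: heads_of_complete.
exact: (Hall _).2.
Qed.

End Completeness.

(** * Testing the cube condition *)

Inductive reversing_result := Reversed of seq T & seq T | Stuck | OutOfFuel.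

Fixpoint reversef (fuel : nat) (u v : seq T) : reversing_result :=
  if fuel is fuel'.+1 then
    match u, v with
    | [::], _ => Reversed v [::]
    | _ :: _, [::] => Reversed [::] u
    | a :: u', b :: v' =>
      if compl a b is Some (p, q) then
        match reversef fuel' u' p with
        | Reversed P Q =>
          match reversef fuel' v' (q ++ Q) with
          | Reversed R K => Reversed (P ++ K) R
          | r => r
          end
        | r => r
        end
      else Stuck
    end
  else OutOfFuel.

Lemma reverses_reversef u v P Q fuel : reverses u v P Q ->
  reversef fuel u v = Reversed P Q \/ reversef fuel u v = OutOfFuel.
Proof.
move=> HR; elim: HR fuel => {u v P Q} [v|a u|a u b v p q P Q R K F _ IH1 _ IH2] [|fuel] /=;
  auto.
by rewrite F; case: (IH1 fuel) => ->; auto; case: (IH2 fuel) => ->; auto.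
Qed.

Definition rewrite_at (w : seq T) (i : nat) (b : T) : option (seq T) :=
  if drop i w is a :: r then
    if compl a b is Some (p, q) then
      if take (size p) r == p then Some (take i w ++ b :: q ++ drop (size p) r) else None
    else None
  else None.

Definition neighbours (alph : seq T) (w : seq T) : seq (seq T) :=
  pmap (fun ib => rewrite_at w ib.1 ib.2) [seq (i, b) | i <- iota 0 (size w), b <- alph].

Definition ball (alph : seq T) (radius : nat) (w : seq T) : seq (seq T) :=
  iter radius (fun s => undup (s ++ flatten (map (neighbours alph) s))) [:: w].

Lemma rewrite_at_cstep w i b u : rewrite_at w i b = Some u -> cstep w u.
Proof.
rewrite /rewrite_at; case Ew: (drop i w) => [|a r] //.
case F: (compl a b) => [[p q]|] //; case: eqP => // Hp [<-].
rewrite -{1}(cat_take_drop i w) Ew -{1}(cat_take_drop (size p) r) Hp.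
exact: CStep.
Qed.

Lemma neighbours_cstep alph w u : u \in neighbours alph w -> cstep w u.
Proof. by rewrite mem_pmap => /mapP [ib _ /esym/rewrite_at_cstep]. Qed.

Lemma ball_ceq alph radius w u : u \in ball alph radius w -> ceq w u.
Proof.
elim: radius u => [|radius IH] u /=; first by rewrite inE => /eqP ->.
rewrite mem_undup mem_cat => /orP [/IH //|/flattenP [s /mapP [v Hv ->]]].
by move/neighbours_cstep/ceq1; apply: ceq_trans (IH _ Hv).
Qed.

(* [Stuck] makes [cube] vacuous, by [reverses_reversef]. *)
Definition cube_test (fuel radius : nat) (alph : seq T) (a b c : T) : bool :=
  match compl a c, compl c b with
  | Some (p1, q1), Some (p2, q2) =>
    match reversef fuel q1 p2 with
    | Reversed P Q =>
      if compl a b is Some (p, q) then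
        let right_ball := ball alph radius (q2 ++ Q) in
        has (fun u => (take (size p) u == p) && (q ++ drop (size p) u \in right_ball))
            (ball alph radius (p1 ++ P))
      else false
    | Stuck => true
    | OutOfFuel => false
    end
  | _, _ => true
  end.

Lemma cube_test_sound fuel radius alph a b c : cube_test fuel radius alph a b c -> cube a b c.
Proof.
move=> Htest p1 q1 p2 q2 P Q F1 F2 HR; move: Htest; rewrite /cube_test F1 F2.
case: (reverses_reversef fuel HR) => -> //.
case: (compl a b) => [[p q]|] // /hasP [u Hu /andP [/eqP Hp Hq]].
exists p, q, (drop (size p) u); split=> //; split; last exact: ball_ceq Hq.
by rewrite -{1}Hp cat_take_drop; apply: ball_ceq Hu.
Qed.

End Reversing.

#[local] Hint Resolve ceq_refl : core.

(** * The complement of SB_n^+ *)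

Definition letter_eqb (a b : letter) : bool :=
  match a, b with
  | Sig i, Sig j | X i, X j => i == j
  | _, _ => false
  end.

Lemma letter_eqP : Equality.axiom letter_eqb.
Proof.
by case=> i [] j /=; try (by constructor); apply: (iffP eqP) => [->|[]].
Qed.

HB.instance Definition _ := hasDecEq.Build letter letter_eqP.

Lemma eq_Sig i j : (Sig i == Sig j) = (i == j). Proof. by []. Qed.
Lemma eq_X i j : (X i == X j) = (i == j). Proof. by []. Qed.

Definition adj (i j : nat) : bool := (j == i.+1) || (i == j.+1).

Lemma adjC i j : adj i j = adj j i.
Proof. by rewrite /adj orbC. Qed.

(* [sb_compl a b = Some (p, q)] records the relation a p = b q; there is none
   between two adjacent x's. Indices are unbounded here: the bound n only
   enters through [sb_eq_of_ceq]. *)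
Definition sb_compl (a b : letter) : option (seq letter * seq letter) :=
  if a == b then Some ([::], [::]) else
  match a, b with
  | Sig i, Sig j => if adj i j then Some ([:: Sig j; Sig i], [:: Sig i; Sig j])
                    else Some ([:: Sig j], [:: Sig i])
  | X i, X j => if adj i j then None else Some ([:: X j], [:: X i])
  | Sig i, X j => if adj i j then Some ([:: Sig j; X i], [:: Sig i; Sig j])
                  else Some ([:: X j], [:: Sig i])
  | X i, Sig j => if adj i j then Some ([:: Sig j; Sig i], [:: Sig i; X j])
                  else Some ([:: Sig j], [:: X i])
  end.

Lemma sb_compl_refl a : sb_compl a a = Some ([::], [::]).
Proof. by rewrite /sb_compl eqxx. Qed.

Lemma sb_compl_sym a b p q : sb_compl a b = Some (p, q) -> sb_compl b a = Some (q, p).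
Proof.
rewrite /sb_compl eq_sym; case: eqP => [_ [<- <-] //|_].
by case: a => i; case: b => j; rewrite adjC; case: adj => // -[<- <-].
Qed.

Lemma sb_compl_size a b p q : sb_compl a b = Some (p, q) -> size p = size q.
Proof.
rewrite /sb_compl; case: eqP => [_ [<- <-] //|_].
by case: a => i; case: b => j; case: adj => // -[<- <-].
Qed.

Definition indices_in (P : pred nat) (w : seq letter) : bool := all (fun a => P (idx a)) w.

Lemma indices_in_cat P u v : indices_in P (u ++ v) = indices_in P u && indices_in P v.
Proof. exact: all_cat. Qed.

Lemma sb_compl_indices (P : pred nat) a b p q : sb_compl a b = Some (p, q) ->
  P (idx a) -> P (idx b) -> indices_in P p && indices_in P q.
Proof.
rewrite /sb_compl; case: eqP => [_ [<- <-] //|_].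
by case: a => i; case: b => j; case: adj => // -[<- <-] /= -> ->.
Qed.

Lemma sb_compl_indices_rhs (P : pred nat) a b p q : sb_compl a b = Some (p, q) ->
  P (idx a) -> indices_in P p -> P (idx b) && indices_in P q.
Proof.
rewrite /sb_compl; case: eqP => [-> [<- <-] /= -> //|_].
by case: a => i; case: b => j; case: adj => // -[<- <-] /= ->; rewrite ?andbT => ->.
Qed.

Lemma not_adjE i j : not_adj i j = ~~ adj i j.
Proof. by rewrite /adj /not_adj orbC. Qed.

Lemma farE i j : far i j = (i != j) && ~~ adj i j.
Proof. by rewrite /far /adj; apply/idP/idP; lia. Qed.

Lemma sb_rel_compl n l r : sb_rel n l r ->
  exists a b p q, sb_compl a b = Some (p, q) /\ l = a :: p /\ r = b :: q.
Proof.
have farF i j : far i j -> (i == j) = false /\ adj i j = false.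
  by rewrite farE => /andP [/negbTE -> /negbTE ->].
case=> [i j _ _ /farF [Eij Aij]|i j _ _ /farF [Eij Aij]|i j _ _ /[!not_adjE] Aij|
         i _ _|i _ _|i _ _].
- by exists (Sig i), (Sig j), [:: Sig j], [:: Sig i]; rewrite /sb_compl eq_Sig Eij Aij.
- by exists (X i), (X j), [:: X j], [:: X i]; rewrite /sb_compl eq_X Eij Aij.
- by exists (X i), (Sig j), [:: Sig j], [:: X i]; rewrite /sb_compl /= (negbTE Aij).
- exists (Sig i), (Sig i.+1), [:: Sig i.+1; Sig i], [:: Sig i; Sig i.+1].
  by rewrite /sb_compl eq_Sig /adj eqxx (ltn_eqF (ltnSn i)).
- exists (Sig i), (X i.+1), [:: Sig i.+1; X i], [:: Sig i; Sig i.+1].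
  by rewrite /sb_compl /= /adj eqxx.
- exists (Sig i.+1), (X i), [:: Sig i; X i.+1], [:: Sig i.+1; Sig i].
  by rewrite /sb_compl /= /adj eqxx orbT.
Qed.

Lemma ceq_of_sb_eq n u v : sb_eq n u v -> ceq sb_compl u v.
Proof.
elim=> {u v} [//|u v _ IH|u v w _ IH1 _ IH2|x y l r /sb_rel_compl [a [b [p [q [F [-> ->]]]]]]].
- exact: (ceq_sym (@sb_compl_sym) IH).
- exact: ceq_trans IH1 IH2.
by apply/ceq1/CStep.
Qed.

Lemma sb_eq_ctx n x y l r : sb_eq n l r -> sb_eq n (x ++ l ++ y) (x ++ r ++ y).
Proof.
elim=> {l r} [w|u v _|u v w _ IH1 _ IH2|u v l r H]; first exact: sb_refl.
- exact: sb_sym.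
- exact: sb_trans IH1 IH2.
by have := sb_step (x ++ u) (v ++ y) H; rewrite !catA.
Qed.

Lemma sb_eq_of_rel n l r : sb_rel n l r -> sb_eq n l r.
Proof. by move/(sb_step [::] [::]); rewrite /= !cats0. Qed.

Lemma sb_eq_of_compl n a b p q : sb_compl a b = Some (p, q) ->
  positive_word n (a :: p) -> sb_eq n (a :: p) (b :: q).
Proof.
move=> F /andP [Ha Hp]; have /andP [Hb _] := sb_compl_indices_rhs (P := vi n) F Ha Hp.
move: F Ha Hb; rewrite /sb_compl; case: eqP => [-> [<- <-] _ _|ne]; first exact: sb_refl.
case: a ne => i; case: b => j ne; case Aij: (adj i j) => // -[<- <-] /= Hi Hj.
- case/orP: Aij => /eqP E; subst; first exact: sb_eq_of_rel (rel_braid Hi Hj).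
  exact: sb_sym (sb_eq_of_rel (rel_braid Hj Hi)).
- apply/sb_eq_of_rel/rel_ss; rewrite // farE Aij andbT.
  by apply/eqP => Eij; apply: ne; rewrite Eij.
- case/orP: Aij => /eqP E; subst; first exact: sb_eq_of_rel (rel_mix1 Hi Hj).
  exact: sb_eq_of_rel (rel_mix2 Hj Hi).
- by apply: sb_sym (sb_eq_of_rel (rel_xs Hj Hi _)); rewrite not_adjE adjC Aij.
- case/orP: Aij => /eqP E; subst; first exact: sb_sym (sb_eq_of_rel (rel_mix2 Hi Hj)).
  exact: sb_sym (sb_eq_of_rel (rel_mix1 Hj Hi)).
- by apply: sb_eq_of_rel (rel_xs Hi Hj _); rewrite not_adjE Aij.
- apply/sb_eq_of_rel/rel_xx; rewrite // farE Aij andbT.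
  by apply/eqP => Eij; apply: ne; rewrite Eij.
Qed.

Lemma sb_eq_of_ceq n u v : ceq sb_compl u v -> positive_word n u ->
  sb_eq n u v /\ positive_word n v.
Proof.
elim=> {u v} [w|u v w St _ IH] Hu; first by split; first exact: sb_refl.
case: St IH Hu => x y a b p q F IH.
rewrite /positive_word all_cat /= all_cat => /and4P [Hx Ha Hp Hy].
have /andP [Hb Hq] := sb_compl_indices_rhs (P := vi n) F Ha Hp.
have [E Hw] : sb_eq n (x ++ b :: q ++ y) w /\ positive_word n w.
  by apply: IH; rewrite /positive_word all_cat /= all_cat; apply/and4P.
split=> //; apply: sb_trans E; rewrite -!cat_cons; apply/sb_eq_ctx/sb_eq_of_compl => //.
exact/andP.
Qed.

(** * The cube condition for SB_n^+ *)

Definition rename (h : nat -> nat) (a : letter) : letter :=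
  match a with Sig i => Sig (h i) | X i => X (h i) end.

Lemma idx_rename h a : idx (rename h a) = h (idx a).
Proof. by case: a. Qed.

Definition adj_embedding (h : nat -> nat) (I : seq nat) :=
  {in I &, forall i j, (h i == h j) = (i == j) /\ (h i == (h j).+1) = (i == j.+1)}.

Section Renaming.

Variables (h : nat -> nat) (I : seq nat).
Hypothesis hI : adj_embedding h I.

Lemma adj_rename i j : i \in I -> j \in I -> adj (h i) (h j) = adj i j.
Proof. by move=> Hi Hj; rewrite /adj (hI Hi Hj).2 (hI Hj Hi).2. Qed.

Lemma rename_eq a b : idx a \in I -> idx b \in I -> (rename h a == rename h b) = (a == b).
Proof. by case: a => i; case: b => j Hi Hj //; apply: (hI Hi Hj).1. Qed.

Lemma sb_compl_rename a b : idx a \in I -> idx b \in I ->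
  sb_compl (rename h a) (rename h b) =
  omap (fun pq => (map (rename h) pq.1, map (rename h) pq.2)) (sb_compl a b).
Proof.
move=> Ha Hb; rewrite /sb_compl (rename_eq Ha Hb); case: eqP => // _.
by case: a Ha => i Ha; case: b Hb => j Hb /=; rewrite (adj_rename Ha Hb); case: adj.
Qed.

Lemma cstep_rename u v : indices_in [in I] u -> cstep sb_compl u v ->
  cstep sb_compl (map (rename h) u) (map (rename h) v) /\ indices_in [in I] v.
Proof.
move=> Hu St; case: St Hu => x y a b p q F.
rewrite !indices_in_cat /= indices_in_cat => /and4P [Hx Ha Hp Hy].
have /andP [Hb Hq] := sb_compl_indices_rhs (P := [in I]) F Ha Hp.
split; last by rewrite !indices_in_cat /= ?indices_in_cat Hx Hb Hq Hy.
by rewrite !map_cat /= !map_cat; apply: CStep; rewrite (sb_compl_rename Ha Hb) F.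
Qed.

Lemma ceq_rename u v : indices_in [in I] u -> ceq sb_compl u v ->
  ceq sb_compl (map (rename h) u) (map (rename h) v) /\ indices_in [in I] v.
Proof.
move=> Hu E; elim: E Hu => {u v} [w|u v w St _ IH] Hu; first by split.
have [St' /IH [E' Hw]] := cstep_rename Hu St.
by split=> //; apply: ceq_cstep St' E'.
Qed.

Lemma reverses_rename u v P Q : reverses sb_compl u v P Q ->
  indices_in [in I] u -> indices_in [in I] v ->
  reverses sb_compl (map (rename h) u) (map (rename h) v) (map (rename h) P) (map (rename h) Q)
  /\ indices_in [in I] P /\ indices_in [in I] Q.
Proof.
elim=> {u v P Q} [v|a u|a u b v p q P Q R K F _ IH1 _ IH2].
- by move=> _ Hv; split; first constructor.
- by move=> Hu _; split; first constructor.
move=> /= /andP [Ha Hu] /andP [Hb Hv].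
have /andP [Hp Hq] := sb_compl_indices F Ha Hb.
have [R1 [HP HQ]] := IH1 Hu Hp.
have HqQ : indices_in [in I] (q ++ Q) by rewrite indices_in_cat Hq HQ.
have [R2 [HR HK]] := IH2 Hv HqQ.
split; last by rewrite indices_in_cat HP HK.
rewrite map_cat; apply: reverses_cons R1 _; first by rewrite (sb_compl_rename Ha Hb) F.
by rewrite -map_cat.
Qed.

End Renaming.

Lemma adj_embedding_inverse (h psi : nat -> nat) (I : seq nat) :
  adj_embedding h I -> {in I, cancel h psi} -> adj_embedding psi (map h I).
Proof.
move=> hI hK _ _ /mapP [i Hi ->] /mapP [j Hj ->].
by rewrite !hK // (hI i j Hi Hj).1 (hI i j Hi Hj).2.
Qed.

Lemma indices_in_rename h (I : seq nat) w :
  indices_in [in I] w -> indices_in [in map h I] (map (rename h) w).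
Proof.
by rewrite /indices_in all_map => /sub_all; apply=> a /= Ha; rewrite idx_rename map_f.
Qed.

Lemma rename_cancel (h psi : nat -> nat) (I : seq nat) w :
  {in I, cancel h psi} -> indices_in [in I] w -> map (rename psi) (map (rename h) w) = w.
Proof.
move=> hK; elim: w => //= a w IH /andP [Ha Hw]; rewrite IH //.
by case: a Ha => i /= Hi; rewrite hK.
Qed.

Lemma exists_cancel_in (h : nat -> nat) (I : seq nat) :
  {in I &, injective h} -> exists psi, {in I, cancel h psi}.
Proof.
move=> hinj; exists (fun t => nth 0 I (find (fun i => h i == t) I)) => i Hi.
have HI : has (fun j => h j == h i) I by apply/hasP; exists i.
have Hfind : find (fun j => h j == h i) I < size I by rewrite -has_find.
by apply: hinj => //; [exact: mem_nth | exact/eqP/(nth_find 0 HI)].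
Qed.

Lemma cube_rename h psi (I : seq nat) a b c :
  adj_embedding h I -> {in I, cancel h psi} -> idx a \in I -> idx b \in I -> idx c \in I ->
  cube sb_compl (rename h a) (rename h b) (rename h c) -> cube sb_compl a b c.
Proof.
move=> hI hK Ha Hb Hc Hcube p1 q1 p2 q2 P Q F1 F2 HR.
have /andP [Hp1 Hq1] := sb_compl_indices (P := [in I]) F1 Ha Hc.
have /andP [Hp2 Hq2] := sb_compl_indices (P := [in I]) F2 Hc Hb.
have [HR' [HP HQ]] := reverses_rename hI HR Hq1 Hp2.
have F1' := sb_compl_rename hI Ha Hc; rewrite F1 /= in F1'.
have F2' := sb_compl_rename hI Hc Hb; rewrite F2 /= in F2'.
have [p' [q' [K' [F' [E1 E2]]]]] := Hcube _ _ _ _ _ _ F1' F2' HR'.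
have := sb_compl_rename hI Ha Hb; rewrite F'.
case F: (sb_compl a b) => [[p q]|] //= [Ep Eq].
have /andP [Hp Hq] := sb_compl_indices (P := [in I]) F Ha Hb.
have psiI := adj_embedding_inverse hI hK.
have Hp1P : indices_in [in I] (p1 ++ P) by rewrite indices_in_cat Hp1 HP.
have Hq2Q : indices_in [in I] (q2 ++ Q) by rewrite indices_in_cat Hq2 HQ.
rewrite -map_cat in E1; rewrite -map_cat in E2.
have [E1' _] := ceq_rename psiI (indices_in_rename h Hp1P) E1.
have [E2' _] := ceq_rename psiI (indices_in_rename h Hq2Q) E2.
exists p, q, (map (rename psi) K'); split=> //; split.
  by move: E1'; rewrite (rename_cancel hK Hp1P) map_cat Ep (rename_cancel hK Hp).
by move: E2'; rewrite (rename_cancel hK Hq2Q) map_cat Eq (rename_cancel hK Hq).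
Qed.

(* Counting the points of I and I + 1 below x shrinks each gap of length at
   least 2 between points of I to length 2, keeping equality and adjacency. *)
Definition compress (I : seq nat) (x : nat) : nat := count [in I ++ map S I] (iota 0 x).

Lemma compress_addn I x d :
  compress I (x + d) = compress I x + count [in I ++ map S I] (iota x d).
Proof. by rewrite /compress iotaD count_cat. Qed.

Lemma compress_mono I : {homo compress I : x y / x <= y}.
Proof. by move=> x y /subnKC <-; rewrite compress_addn leq_addr. Qed.

Lemma compressS I x : x \in I ++ map S I -> compress I x.+1 = (compress I x).+1.
Proof. by move=> Hx; rewrite -addn1 compress_addn /= Hx addn1. Qed.

Lemma compress_lt I x y : x \in I -> x < y -> compress I x < compress I y.
Proof. by move=> Hx; rewrite -compressS ?mem_cat ?Hx //; apply: compress_mono. Qed.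

Lemma compress_gap I x y : x \in I -> x.+1 < y -> (compress I x).+1 < compress I y.
Proof.
move=> Hx; have Hx1 : x.+1 \in I ++ map S I by rewrite mem_cat map_f ?orbT.
by rewrite -compressS ?mem_cat ?Hx // -compressS //; apply: compress_mono.
Qed.

Lemma compress_adj_embedding (I : seq nat) : adj_embedding (compress I) I.
Proof.
move=> x y Hx Hy; split.
  case: (ltngtP x y) => [xy|yx|->]; last exact: eqxx.
    by rewrite ltn_eqF ?compress_lt.
  by rewrite gtn_eqF ?compress_lt.
case: (ltngtP x y.+1) => [xy|yx|->]; last by rewrite compressS ?mem_cat ?Hy ?eqxx.
  by rewrite ltn_eqF // ltnS compress_mono.
by rewrite gtn_eqF ?compress_gap.
Qed.

Lemma compress_le I x : compress I x <= (size I).*2.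
Proof.
rewrite /compress -size_filter -addnn -{2}(size_map S I) -size_cat.
apply: uniq_leq_size; first exact/filter_uniq/iota_uniq.
by move=> t; rewrite mem_filter => /andP [].
Qed.

Definition letters_below (k : nat) : seq letter :=
  [seq Sig i | i <- iota 0 k] ++ [seq X i | i <- iota 0 k].

Lemma mem_letters_below k a : idx a < k -> a \in letters_below k.
Proof. by case: a => i Hi; rewrite mem_cat map_f ?orbT // mem_iota. Qed.

Lemma sb_cube_test_letters_below7 :
  let L := letters_below 7 in
  all (fun a => all (fun b => all (cube_test sb_compl 10 4 L a b) L) L) L.
Proof. by vm_compute. Qed.

Theorem sb_cube a b c : cube sb_compl a b c.
Proof.
set I := [:: idx a; idx b; idx c].
have hI : adj_embedding (compress I) I by apply: compress_adj_embedding.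
have [psi hK] : exists psi, {in I, cancel (compress I) psi}.
  by apply: exists_cancel_in => x y Hx Hy /eqP; rewrite (hI x y Hx Hy).1 => /eqP.
apply: (cube_rename hI hK); rewrite ?inE ?eqxx ?orbT //.
have HL d : rename (compress I) d \in letters_below 7.
  by rewrite mem_letters_below // idx_rename (leq_ltn_trans (compress_le _ _)).
apply: cube_test_sound.
exact: (allP (allP (allP sb_cube_test_letters_below7 _ (HL a)) _ (HL b)) _ (HL c)).
Qed.

(** * Division *)

Lemma sb_compl_sigma n a b p q : sb_compl a b = Some (p, q) ->
  valid_letter n a && is_sig a -> valid_letter n b && is_sig b ->
  sigma_word n p && sigma_word n q.
Proof.
rewrite /sb_compl; case: eqP => [_ [<- <-] //|_].
by case: a => i; case: b => j; case: adj => // -[<- <-] /=; rewrite ?andbT ?andbF // => -> ->.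
Qed.

Lemma sigma_word_positive n w : sigma_word n w -> positive_word n w.
Proof. by apply: sub_all => a /andP []. Qed.

Lemma left_division n W S A V :
  positive_word n W -> sigma_word n S ->
  (exists T, positive_word n T /\ sb_eq n W (S ++ T)) ->
  (forall S' T', sigma_word n S' -> positive_word n T' ->
      sb_eq n W (S' ++ T') -> size S' <= size S) ->
  sigma_word n A -> positive_word n V -> sb_eq n W (A ++ V) ->
  exists U, positive_word n U /\ sb_eq n S (A ++ U).
Proof.
move=> HW HS [T [_ EWT]] Hmax HA _ EWV.
have /ceq_of_sb_eq EWV' := EWV.
have E : ceq sb_compl (A ++ V) (S ++ T).
  exact: ceq_trans (ceq_sym (@sb_compl_sym) EWV') (ceq_of_sb_eq EWT).
have [P [Q [Z [HR [EV _]]]]] :=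
  reversing_complete (@sb_compl_sym) sb_compl_refl (@sb_compl_size) sb_cube E.
have /andP [HP HQ] := reverses_all (@sb_compl_sigma n) HR HA HS.
have EW : ceq sb_compl W ((S ++ Q) ++ Z).
  apply: ceq_trans EWV' _; apply: ceq_trans (ceq_catl A EV) _.
  by rewrite catA; apply: ceq_catr; apply: (reverses_ceq (@sb_compl_sym) HR).
have HSQ : sigma_word n (S ++ Q) by rewrite /sigma_word all_cat; apply/andP.
have [ESQZ HSQZ] := sb_eq_of_ceq EW HW.
have HZ : positive_word n Z by move: HSQZ; rewrite /positive_word all_cat => /andP [].
have /nilP EQ : size Q == 0.
  by rewrite -leqn0 -(leq_add2l (size S)) addn0 -size_cat (Hmax _ _ HSQ HZ ESQZ).
exists P; split; first exact: sigma_word_positive.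
have := reverses_ceq (@sb_compl_sym) HR; rewrite EQ cats0 => /(ceq_sym (@sb_compl_sym)) ESAP.
exact: (sb_eq_of_ceq ESAP (sigma_word_positive HS)).1.
Qed.

Lemma sb_rel_rev n l r : sb_rel n l r -> sb_eq n (rev l) (rev r).
Proof.
case=> [i j Hi Hj H|i j Hi Hj H|i j Hi Hj H|i Hi Hj|i Hi Hj|i Hi Hj]; rewrite /rev /=.
- by apply/sb_eq_of_rel/rel_ss; rewrite // /far orbC.
- by apply/sb_eq_of_rel/rel_xx; rewrite // /far orbC.
- exact: sb_sym (sb_eq_of_rel (rel_xs Hi Hj H)).
- exact: sb_eq_of_rel (rel_braid Hi Hj).
- exact: sb_sym (sb_eq_of_rel (rel_mix2 Hi Hj)).
- exact: sb_sym (sb_eq_of_rel (rel_mix1 Hi Hj)).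
Qed.

Lemma sb_eq_rev n u v : sb_eq n u v -> sb_eq n (rev u) (rev v).
Proof.
elim=> {u v} [w|u v _|u v w _ IH1 _ IH2|u v l r /sb_rel_rev H]; first exact: sb_refl.
- exact: sb_sym.
- exact: sb_trans IH1 IH2.
by rewrite !rev_cat -!catA; apply: sb_eq_ctx.
Qed.

Lemma sb_eq_rev_cat n u v w : sb_eq n u (v ++ w) -> sb_eq n (rev u) (rev w ++ rev v).
Proof. by move/sb_eq_rev; rewrite rev_cat. Qed.

Lemma positive_word_rev n w : positive_word n (rev w) = positive_word n w.
Proof. exact: all_rev. Qed.

Lemma sigma_word_rev n w : sigma_word n (rev w) = sigma_word n w.
Proof. exact: all_rev. Qed.

Lemma right_division n W S A V :
  positive_word n W -> sigma_word n S ->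
  (exists T, positive_word n T /\ sb_eq n W (T ++ S)) ->
  (forall S' T', sigma_word n S' -> positive_word n T' ->
      sb_eq n W (T' ++ S') -> size S' <= size S) ->
  sigma_word n A -> positive_word n V -> sb_eq n W (V ++ A) ->
  exists U, positive_word n U /\ sb_eq n S (U ++ A).
Proof.
move=> HW HS [T [HT EWT]] Hmax HA HV EWV.
have [U [HU EU]] : exists U, positive_word n U /\ sb_eq n (rev S) (rev A ++ U).
  apply: (@left_division n (rev W) _ _ (rev V));
    rewrite ?positive_word_rev ?sigma_word_rev //.
  - by exists (rev T); rewrite positive_word_rev; split=> //; apply: sb_eq_rev_cat.
  - move=> S' T' HS' HT' /sb_eq_rev_cat; rewrite revK => EW.
    rewrite size_rev -(revK S') size_rev.
    by rewrite (Hmax _ _ _ _ EW) ?sigma_word_rev ?positive_word_rev.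
  - exact: sb_eq_rev_cat.
exists (rev U); rewrite positive_word_rev; split=> //.
by have := sb_eq_rev_cat EU; rewrite !revK.
Qed.

Theorem proposition2p2 (n : nat) (hn : 2 <= n) :
  (* left division *)
  (forall (W S A V : seq letter),
    positive_word n W -> sigma_word n S ->
    (exists T, positive_word n T /\ sb_eq n W (S ++ T)) ->
    (forall S' T', sigma_word n S' -> positive_word n T' ->
        sb_eq n W (S' ++ T') -> size S' <= size S) ->
    sigma_word n A -> positive_word n V -> sb_eq n W (A ++ V) ->
    exists U, positive_word n U /\ sb_eq n S (A ++ U))
  /\
  (* right division *)
  (forall (W S A V : seq letter),
    positive_word n W -> sigma_word n S ->
    (exists T, positive_word n T /\ sb_eq n W (T ++ S)) ->
    (forall S' T', sigma_word n S' -> positive_word n T' ->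
        sb_eq n W (T' ++ S') -> size S' <= size S) ->
    sigma_word n A -> positive_word n V -> sb_eq n W (V ++ A) ->
    exists U, positive_word n U /\ sb_eq n S (U ++ A)).
Proof.
by split=> W S A V; [apply: left_division | apply: right_division].
Qed.
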